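(* (i) For any $W \in \mathbb{R}^{m \times n}$ with $m < 2n$, the map $x \mapsto \operatorname{ReLU}(Wx)$ from $\mathbb{R}^n$ to $\mathbb{R}^m$ is not injective. (ii) If $W \in \mathbb{R}^{2n \times n}$ has a directed spanning set of $\mathbb{R}^n$ with respect to every $x \in \mathbb{R}^n$, then, up to a rearrangement of its rows, $W = \begin{bmatrix} B \\ -DB \end{bmatrix}$, where $B \in \mathbb{R}^{n\times n}$ is invertible (its rows form a basis of $\mathbb{R}^n$) and $D \in \mathbb{R}^{n \times n}$ is a diagonal matrix with strictly positive diagonal entries.
   Context: $\operatorname{ReLU}(y)=\max(y,0)$ componentwise. A matrix $W$ with rows $w_i\in\mathbb{R}^n$ has a directed spanning set (DSS) of $\mathbb{R}^n$ with respect to $x \in \mathbb{R}^n$ if the rows $\{w_i : \langle x, w_i\rangle \geq 0\}$ span $\mathbb{R}^n$. *)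

From mathcomp Require Import all_boot all_order all_algebra.
From mathcomp Require Import perm.
Set Implicit Arguments. Unset Strict Implicit. Unset Printing Implicit Defensive.
Import Order.TTheory GRing.Theory Num.Theory.
Local Open Scope ring_scope.

(* Vectors of R^n are column vectors 'cV[R]_n; a matrix W : 'M[R]_(m,n)
   has rows w_i = row i W. *)

Definition relu (R : realFieldType) (m : nat) (y : 'cV[R]_m) : 'cV[R]_m :=
  map_mx (fun a => Num.max a 0) y.

Definition rowdot (R : realFieldType) (m n : nat) (W : 'M[R]_(m, n))
  (i : 'I_m) (x : 'cV[R]_n) : R := \sum_(j < n) W i j * x j 0.

Definition has_dss (R : realFieldType) (m n : nat) (W : 'M[R]_(m, n))
  (x : 'cV[R]_n) : Prop :=
  (1%:M <= \sum_(i < m | (0 <= rowdot W i x)%R) <<row i W>>)%MS.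

From mathcomp Require Import all_boot all_order all_algebra.
From mathcomp Require Import perm.
From mathcomp Require Import lra zify.
Set Implicit Arguments. Unset Strict Implicit. Unset Printing Implicit Defensive.
Import Order.TTheory GRing.Theory Num.Theory.
Local Open Scope ring_scope.

(* Write S(x) for the span of the rows w_i of W with <x, w_i> >= 0.  If S(x)
   is a proper subspace, a nonzero v orthogonal to it gives
   ReLU(W(s x)) = ReLU(W(s x + v)) for s large, so injectivity forces a DSS at
   every x.  At a generic x (orthogonal to no nonzero row) the DSS at x and at
   -x needs n rows with <x, w_i> > 0 and n rows with <x, w_i> < 0, so m >= 2n.
   When m = 2n these rows form square blocks B, C with B x > 0 > C x; the DSS
   at points where one block is negative makes B and C invertible and the
   mutually inverse matrices -C B^-1 and -B C^-1 entrywise nonnegative, and a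
   nonnegative matrix with nonnegative inverse is a positive diagonal matrix
   times a permutation matrix. *)

Section SpanOfRows.
Variable F : fieldType.

Lemma mxrank_sum_rows m n (M : 'M[F]_(m, n)) (P : pred 'I_m) :
  (\rank (\sum_(i | P i) <<row i M>>) <= #|[pred i | P i && (row i M != 0%R)]|)%N.
Proof.
rewrite -sum1_card big_mkcondr /=.
apply: (big_ind2 (fun (A : 'M_n) k => \rank A <= k)%N) => [|A1 k1 A2 k2 h1 h2|i _].
- by rewrite mxrank0.
- exact: leq_trans (mxrank_adds_leqif A1 A2).1 (leq_add h1 h2).
- by rewrite genmxE rank_rV; case: (row i M != 0).
Qed.

Lemma card_nonzero_rows_ge m n (M : 'M[F]_(m, n)) (P : pred 'I_m) :
  (1%:M <= \sum_(i | P i) <<row i M>>)%MS ->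
  (n <= #|[pred i | P i && (row i M != 0%R)]|)%N.
Proof.
move=> /mxrankS; rewrite mxrank1 => rk_n.
exact: leq_trans rk_n (mxrank_sum_rows M P).
Qed.

Lemma sum_rows_full_all n (M : 'M[F]_n) (P : pred 'I_n) :
  (1%:M <= \sum_(i | P i) <<row i M>>)%MS -> forall i, P i.
Proof.
move=> /card_nonzero_rows_ge card_n i; apply: contraT => notPi.
have : (#|[pred i | P i && (row i M != 0%R)]| <= #|predC1 i|)%N.
  by apply: subset_leq_card; apply/subsetP => k /[!inE] /andP[Pk _];
     apply: contraNneq notPi => <-.
rewrite cardC1 card_ord => /(leq_trans card_n); have := ltn_ord i; lia.
Qed.

Lemma sum_rows_sub m n (M : 'M[F]_(m, n)) (P : pred 'I_m) :
  (\sum_(i | P i) <<row i M>> <= M)%MS.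
Proof. by apply/sumsmx_subP => i _; rewrite genmxE row_sub. Qed.

Lemma exists_nonzero_kernel_col m n (S : 'M[F]_(m, n)) :
  ~~ row_full S -> exists2 v : 'cV[F]_n, v != 0 & S *m v = 0.
Proof.
move=> notfull; pose u := nz_row (kermx S^T).
exists u^T.
  by rewrite trmx_eq0 nz_row_eq0 kermx_eq0 /row_free mxrank_tr.
apply: trmx_inj; rewrite trmx_mul trmxK trmx0; apply/sub_kermxP.
exact: nz_row_sub.
Qed.

End SpanOfRows.

Lemma exists_inj_ord_into (T : finType) (A : pred T) m :
  (m <= #|A|)%N -> exists f : 'I_m -> T, injective f /\ forall k, f k \in A.
Proof.
move=> le_m_A; exists (fun k => enum_val (widen_ord le_m_A k)); split.
  by move=> a b /enum_val_inj /(congr1 val) /= /val_inj.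
by move=> k; apply: enum_valP.
Qed.

Lemma exists_row_perm_col_mx m n
    (f : 'I_m -> 'I_(m + n)) (g : 'I_n -> 'I_(m + n)) :
  injective f -> injective g -> (forall a b, f a != g b) ->
  exists s : 'S_(m + n), forall T p (W : 'M[T]_(m + n, p)),
    row_perm s W = col_mx (rowsub f W) (rowsub g W).
Proof.
move=> inj_f inj_g fg.
pose h (u : 'I_m + 'I_n) := match u with inl a => f a | inr b => g b end.
have inj_h : injective (h \o split).
  apply: inj_comp (can_inj splitK) => [[a|a] [b|b] /= e].
  - by rewrite (inj_f _ _ e).
  - by move: (fg a b); rewrite e eqxx.
  - by move: (fg b a); rewrite e eqxx.
  - by rewrite (inj_g _ _ e).
exists (perm inj_h) => T p W.
rewrite row_permEsub -[rowsub _ W]vsubmxK usubmxEsub dsubmxEsub -!rowsub_comp.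
congr col_mx; apply: eq_rowsub => k; rewrite /= permE /=.
- by rewrite -[lshift n k]/(unsplit (inl k)) unsplitK.
- by rewrite -[rshift m k]/(unsplit (inr k)) unsplitK.
Qed.

Lemma exists_nonroot (R : numDomainType) (p : {poly R}) :
  p != 0 -> exists t, ~~ root p t.
Proof.
move=> p_neq0.
have uniq_nat : uniq [seq (i%:R : R) | i <- iota 0 (size p)].
  by rewrite map_inj_uniq ?iota_uniq //; apply: mulrIn; rewrite oner_eq0.
have := contraNN (fun all_roots => max_poly_roots p_neq0 all_roots uniq_nat).
rewrite size_map size_iota ltnn => /(_ isT) /allPn[t _ nroot_t].
by exists t.
Qed.

Lemma mul_col_exprE (R : comNzRingType) m n (W : 'M[R]_(m, n)) (t : R) i :
  (W *m \col_j (t ^+ j)) i 0 = (rVpoly (row i W)).[t].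
Proof.
rewrite mxE (horner_coef_wide _ (size_poly _ _)).
by apply: eq_bigr => j _; rewrite coef_rVpoly_ord !mxE.
Qed.

Definition generic_for (R : nzRingType) m n (W : 'M[R]_(m, n)) (x : 'cV[R]_n) :=
  forall i, row i W != 0 -> (W *m x) i 0 != 0.

Lemma generic_forN (R : nzRingType) m n (W : 'M[R]_(m, n)) (x : 'cV[R]_n) :
  generic_for W x -> generic_for W (- x).
Proof. by move=> gen i nz; rewrite mulmxN mxE oppr_eq0 gen. Qed.

(* Take x = (1, t, ..., t^(n-1)) for t not a root of any nonzero row polynomial. *)
Lemma exists_generic_vector (R : numFieldType) m n (W : 'M[R]_(m, n)) :
  exists x, generic_for W x.
Proof.
have rVpoly_neq0 i : row i W != 0 -> rVpoly (row i W) != 0.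
  by apply: contra_neq => /(congr1 (@poly_rV _ n)); rewrite rVpolyK linear0.
have /exists_nonroot[t nroot_t] :
    \prod_(i | row i W != 0) rVpoly (row i W) != 0 by apply/prodf_neq0.
exists (\col_j (t ^+ j)) => i nz_i; rewrite mul_col_exprE.
move: nroot_t; rewrite /root horner_prod; apply: contra => /eqP root_i.
by rewrite (bigD1 i) //= root_i mul0r.
Qed.

Lemma relu_add_absorbed (R : realFieldType) m (y v : 'cV[R]_m) :
  (forall i, 0 <= y i 0 -> v i 0 = 0) ->
  exists s, relu (s *: y) = relu (s *: y + v).
Proof.
move=> v_supp; pose s := \sum_i `|v i 0| / `|y i 0|.
have s_ge0 : 0 <= s by apply: sumr_ge0 => i _; apply: divr_ge0.
exists s; apply/matrixP => i b; rewrite (ord1 b) !mxE.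
have [y_ge0|y_lt0] := leP 0 (y i 0); first by rewrite v_supp // addr0.
have : `|v i 0| / `|y i 0| <= s.
  by rewrite /s (bigD1 i) //= lerDl; apply: sumr_ge0 => k _; apply: divr_ge0.
rewrite ler_pdivrMr ?normr_gt0 ?ltr0_neq0 // (ltr0_norm y_lt0) mulrN => v_le.
have := ler_norm (v i 0); have := mulr_ge0_le0 s_ge0 (ltW y_lt0).
by move=> sy_le0 v_le_norm; rewrite !max_r //; lra.
Qed.

Lemma nonpos_of_nonneg_on_neg (R : realFieldType) p n (A : 'M[R]_(p, n)) :
  (forall y : 'cV[R]_n, (forall k, y k 0 < 0) -> forall c, 0 <= (A *m y) c 0) ->
  forall c k, A c k <= 0.
Proof.
(* Otherwise y = -(s e_k + 1) with s A_ck = |sum_j A_cj| + 1 makes (A y)_c < 0. *)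
move=> nonneg c k; rewrite leNgt; apply/negP => Ack_gt0.
pose sigma := \sum_j A c j.
pose s := (`|sigma| + 1) / A c k.
have s_gt0 : 0 < s by rewrite divr_gt0 // ltr_wpDl.
pose y : 'cV_n := - (s *: delta_mx k 0 + const_mx 1).
have y_neg j : y j 0 < 0.
  rewrite !mxE oppr_lt0 ltr_wpDl //; apply: mulr_ge0; [exact: ltW | exact: ler0n].
have := nonneg y y_neg c.
rewrite mulmxN mulmxDr -scalemxAr -colE !mxE.
under eq_bigr do rewrite mxE mulr1.
rewrite -/sigma /s divfK ?gt_eqF // => h.
have := ler_norm (- sigma); rewrite normrN; lra.
Qed.

Section NonnegativeInverse.
Variables (R : realFieldType) (n : nat) (N M : 'M[R]_n).
Hypotheses (NM : N *m M = 1%:M) (MN : M *m N = 1%:M).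
Hypotheses (N_ge0 : forall i j, 0 <= N i j) (M_ge0 : forall i j, 0 <= M i j).

Lemma nonneg_inverse_row_support i :
  exists k, 0 < N i k /\ forall j, j != k -> N i j = 0.
Proof.
have NMii : \sum_l N i l * M l i = 1.
  by have := congr1 (fun A : 'M_n => A i i) NM; rewrite /= !mxE eqxx.
have [k NMik_gt0] : exists k, 0 < N i k * M k i.
  apply/existsP; apply: contraT; rewrite negb_exists => /forallP NMi_le0.
  have : \sum_l N i l * M l i = 0.
    apply: big1 => l _; apply/eqP; rewrite eq_le mulr_ge0 // andbT.
    by rewrite leNgt NMi_le0.
  by rewrite NMii => /eqP; rewrite oner_eq0.
have Mki_gt0 : 0 < M k i.
  by rewrite lt_def M_ge0 andbT; apply: contraTneq NMik_gt0 => ->; rewrite mulr0 ltxx.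
have Nik_gt0 : 0 < N i k.
  by rewrite lt_def N_ge0 andbT; apply: contraTneq NMik_gt0 => ->; rewrite mul0r ltxx.
exists k; split => // j jk.
have : (M *m N) k j = 0 by rewrite MN !mxE eq_sym (negbTE jk).
rewrite mxE => /(psumr_eq0P (fun l _ => mulr_ge0 (M_ge0 k l) (N_ge0 l j))).
move=> /(_ i isT).
by move/eqP; rewrite mulf_eq0 (gt_eqF Mki_gt0) => /eqP.
Qed.

Lemma nonneg_inverse_diag_perm :
  exists (t : 'S_n) (d : 'rV[R]_n), (forall i, 0 < d 0 i) /\ N = diag_mx d *m perm_mx t.
Proof.
have [t t_supp] := fin_all_exists nonneg_inverse_row_support.
have NE (A : 'M_n) i j : (N *m A) i j = N i (t i) * A (t i) j.
  rewrite mxE (bigD1 (t i)) //= big1 ?addr0 // => l lt.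
  by rewrite (t_supp i).2 // mul0r.
have inj_t : injective t.
  move=> i i' tii'; apply/eqP; apply: contraT => ii'.
  have := NE M i' i; rewrite NM !mxE eq_sym (negbTE ii') => /esym/eqP.
  rewrite mulf_eq0 (gt_eqF (t_supp i').1) -tii' /= => /eqP Mi0.
  by have := NE M i i; rewrite NM !mxE eqxx Mi0 mulr0 => /eqP; rewrite oner_eq0.
exists (perm inj_t), (\row_i N i (t i)).
split => [i|]; first by rewrite mxE; apply: (t_supp i).1.
apply/matrixP => i j; rewrite mul_diag_mx !mxE permE.
have [<-|tij] := eqVneq (t i) j; first by rewrite mulr1.
by rewrite mulr0 (t_supp i).2 // eq_sym.
Qed.

End NonnegativeInverse.

Section DirectedSpanningSets.
Variable R : realFieldType.

Definition directed_span m n (W : 'M[R]_(m, n)) (x : 'cV[R]_n) : 'M[R]_n :=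
  (\sum_(i | (0 <= (W *m x) i 0)%R) <<row i W>>)%MS.

Lemma rowdotE m n (W : 'M[R]_(m, n)) i x : rowdot W i x = (W *m x) i 0.
Proof. by rewrite mxE. Qed.

Lemma has_dssE m n (W : 'M[R]_(m, n)) x :
  has_dss W x <-> (1%:M <= directed_span W x)%MS.
Proof. by rewrite /has_dss; under eq_bigl do rewrite rowdotE. Qed.

Lemma directed_span_row_perm m n (s : 'S_m) (W : 'M[R]_(m, n)) x :
  directed_span (row_perm s W) x = directed_span W x.
Proof.
rewrite /directed_span [in RHS](reindex_inj (@perm_inj _ s)).
rewrite row_permEsub mul_rowsub_mx.
by apply: eq_big => [i|i _]; rewrite ?mxE ?row_rowsub.
Qed.

Lemma has_dss_row_perm m n (s : 'S_m) (W : 'M[R]_(m, n)) x :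
  has_dss (row_perm s W) x <-> has_dss W x.
Proof. by rewrite !has_dssE directed_span_row_perm. Qed.

Lemma directed_span_col_mx m p n (B : 'M[R]_(m, n)) (C : 'M[R]_(p, n)) x :
  directed_span (col_mx B C) x = (directed_span B x + directed_span C x)%MS.
Proof.
rewrite /directed_span big_split_ord mul_col_mx.
by congr (_ + _)%MS; apply: eq_big => [i|i _];
  rewrite ?col_mxEu ?col_mxEd ?rowKu ?rowKd.
Qed.

Lemma has_dss_col_mx m p n (B : 'M[R]_(m, n)) (C : 'M[R]_(p, n)) x :
  has_dss (col_mx B C) x <-> (1%:M <= directed_span B x + directed_span C x)%MS.
Proof. by rewrite has_dssE directed_span_col_mx. Qed.

Lemma has_dss_col_mxC m p n (B : 'M[R]_(m, n)) (C : 'M[R]_(p, n)) x :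
  has_dss (col_mx B C) x -> has_dss (col_mx C B) x.
Proof. by rewrite !has_dss_col_mx addsmxC. Qed.

Lemma directed_span_eq0 m n (W : 'M[R]_(m, n)) x :
  (forall i, (W *m x) i 0 < 0) -> directed_span W x = 0.
Proof. by move=> W_neg; apply: big_pred0 => i; rewrite leNgt W_neg. Qed.

Lemma has_dss_col_mx_neg m p n (B : 'M[R]_(m, n)) (C : 'M[R]_(p, n)) x :
  has_dss (col_mx B C) x -> (forall k, (B *m x) k 0 < 0) ->
  (1%:M <= directed_span C x)%MS.
Proof. by move=> /has_dss_col_mx + /directed_span_eq0 B0; rewrite B0 adds0mx_id. Qed.

Lemma has_dss_card_pos m n (W : 'M[R]_(m, n)) x :
  has_dss W x -> generic_for W x ->
  (n <= #|[pred i | (0 < (W *m x) i 0)%R]|)%N.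
Proof.
move=> /has_dssE /card_nonzero_rows_ge card_n gen; apply: leq_trans card_n _.
apply/subset_leq_card/subsetP => i /[!inE] /andP[ge0 nz].
by rewrite lt_def ge0 andbT gen.
Qed.

Lemma relu_injective_has_dss m n (W : 'M[R]_(m, n)) :
  injective (fun x => relu (W *m x)) -> forall x, has_dss W x.
Proof.
move=> inj x; rewrite has_dssE sub1mx; apply: contraT => notfull.
have [v v_neq0 Sv] := exists_nonzero_kernel_col notfull.
have Wv0 i : 0 <= (W *m x) i 0 -> (W *m v) i 0 = 0.
  move=> ge0; have /submxP[D rowE] : (row i W <= directed_span W x)%MS.
    by apply: (sumsmx_sup i) => //; rewrite genmxE.
  have : row i (W *m v) = 0 by rewrite row_mul rowE -mulmxA Sv mulmx0.
  by move/rowP/(_ 0); rewrite !mxE.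
have [s] := relu_add_absorbed Wv0.
rewrite scalemxAr -mulmxDr => /inj /(congr1 (fun z => z - s *: x)).
by rewrite subrr addrC addKr => v0; rewrite -v0 eqxx in v_neq0.
Qed.

End DirectedSpanningSets.

Section SquareBlocks.
Variables (R : realFieldType) (m n : nat).
Variables (B : 'M[R]_(m, n)) (C : 'M[R]_n) (x : 'cV[R]_n).
Hypotheses (dss : has_dss (col_mx B C) x) (B_neg : forall k, (B *m x) k 0 < 0).

Lemma has_dss_col_mx_unit : C \in unitmx.
Proof.
rewrite -row_full_unit -sub1mx.
exact: submx_trans (has_dss_col_mx_neg dss B_neg) (sum_rows_sub _ _).
Qed.

Lemma has_dss_col_mx_nonneg k : 0 <= (C *m x) k 0.
Proof. exact: sum_rows_full_all (has_dss_col_mx_neg dss B_neg) k. Qed.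

End SquareBlocks.

Lemma dss_mul_invmx_le0 (R : realFieldType) n (B C : 'M[R]_n) :
  (forall x, has_dss (col_mx B C) x) -> B \in unitmx ->
  forall c k, (C *m invmx B) c k <= 0.
Proof.
move=> dss B_unit; apply: nonpos_of_nonneg_on_neg => y y_neg c.
rewrite -mulmxA; apply: (has_dss_col_mx_nonneg (dss (invmx B *m y))) => k.
by rewrite mulmxA mulmxV // mul1mx.
Qed.

Lemma dss_col_mx_structure (R : realFieldType) n (B C : 'M[R]_n) (x0 : 'cV[R]_n) :
  (forall x, has_dss (col_mx B C) x) ->
  (forall k, 0 < (B *m x0) k 0) -> (forall k, (C *m x0) k 0 < 0) ->
  B \in unitmx /\ exists (t : 'S_n) (d : 'rV[R]_n),
    (forall i, 0 < d 0 i) /\ C = - (diag_mx d *m row_perm t B).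
Proof.
move=> dss B_pos C_neg.
have dssC x : has_dss (col_mx C B) x by apply/has_dss_col_mxC.
have B_unit : B \in unitmx := has_dss_col_mx_unit (dssC x0) C_neg.
have C_unit : C \in unitmx.
  by apply: (has_dss_col_mx_unit (dss (- x0))) => k; rewrite mulmxN mxE oppr_lt0.
have NM : - (C *m invmx B) *m - (B *m invmx C) = 1%:M.
  by rewrite mulNmx mulmxN opprK mulmxA mulmxKV // mulmxV.
have MN : - (B *m invmx C) *m - (C *m invmx B) = 1%:M.
  by rewrite mulNmx mulmxN opprK mulmxA mulmxKV // mulmxV.
have N_ge0 i j : 0 <= (- (C *m invmx B)) i j.
  by rewrite mxE oppr_ge0 (dss_mul_invmx_le0 dss).
have M_ge0 i j : 0 <= (- (B *m invmx C)) i j.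
  by rewrite mxE oppr_ge0 (dss_mul_invmx_le0 dssC).
have [t [d [d_pos NE]]] := nonneg_inverse_diag_perm NM MN N_ge0 M_ge0.
split => //; exists t, d; split => //.
by rewrite row_permE mulmxA -NE mulNmx opprK mulmxKV.
Qed.

Lemma relu_not_injective (R : realFieldType) m n (W : 'M[R]_(m, n)) :
  (m < 2 * n)%N -> ~ injective (fun x => relu (W *m x)).
Proof.
move=> lt_m_2n /relu_injective_has_dss dss.
have [x gen] := exists_generic_vector W.
have pos := has_dss_card_pos (dss x) gen.
have neg := has_dss_card_pos (dss (- x)) (generic_forN gen).
have : (#|[pred i | (0 < (W *m x) i 0)%R]|
        + #|[pred i | (0 < (W *m - x) i 0)%R]| <= m)%N.
  rewrite -[X in (_ <= X)%N]card_ord -(cardC [pred i | (0 < (W *m x) i 0)%R]).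
  rewrite leq_add2l; apply/subset_leq_card/subsetP => i /[!inE].
  by rewrite mulmxN mxE oppr_gt0 -leNgt => /ltW.
lia.
Qed.

Lemma dss_everywhere_structure (R : realFieldType) n (W : 'M[R]_(n + n, n)) :
  (forall x, has_dss W x) ->
  exists (s : 'S_(n + n)) (B : 'M[R]_n) (d : 'rV[R]_n),
    B \in unitmx /\ (forall i, 0 < d 0 i) /\
    row_perm s W = col_mx B (- (diag_mx d *m B)).
Proof.
move=> dss; have [x0 gen] := exists_generic_vector W.
have [f [inj_f f_pos]] := exists_inj_ord_into (has_dss_card_pos (dss x0) gen).
have [g [inj_g g_neg]] :=
  exists_inj_ord_into (has_dss_card_pos (dss (- x0)) (generic_forN gen)).
have oppE i : (W *m - x0) i 0 = - (W *m x0) i 0 by rewrite mulmxN mxE.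
have fg a b : f a != g b.
  apply: contraTneq (g_neg b) => <-; rewrite inE oppE oppr_gt0 -leNgt.
  exact/ltW/f_pos.
have [s1 s1E] := exists_row_perm_col_mx inj_f inj_g fg.
have dssBC x : has_dss (col_mx (rowsub f W) (rowsub g W)) x.
  by rewrite -s1E has_dss_row_perm.
have [||B_unit [t [d [d_pos CE]]]] := dss_col_mx_structure dssBC (x0 := x0).
- by move=> k; rewrite mul_rowsub_mx mxE; apply: f_pos.
- by move=> k; rewrite mul_rowsub_mx mxE -oppr_gt0 -oppE; apply: g_neg.
have [s2 s2E] := exists_row_perm_col_mx (inj_comp inj_f (@perm_inj _ t)) inj_g
  (fun a b => fg (t a) b).
exists s2, (row_perm t (rowsub f W)), d.
split; first by rewrite row_permE unitmx_mul unitmx_perm.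
by split => //; rewrite s2E -CE row_permEsub -rowsub_comp.
Qed.

Theorem corollary1 (R : realFieldType) :
  (forall (m n : nat) (W : 'M[R]_(m, n)), (m < 2 * n)%N ->
     ~ injective (fun x : 'cV[R]_n => relu (W *m x)))
  /\
  (forall (n : nat) (W : 'M[R]_(n + n, n)),
     (forall x : 'cV[R]_n, has_dss W x) ->
     exists (s : 'S_(n + n)) (B : 'M[R]_n) (d : 'rV[R]_n),
       B \in unitmx /\ (forall i, 0 < d 0 i) /\
       row_perm s W = col_mx B (- (diag_mx d *m B))).
Proof.
split; [exact: relu_not_injective | exact: dss_everywhere_structure].
Qed.
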